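(* Let $G$ be a modular noetherian right $\ell$-group with degree homomorphism $\deg : G \to \mathbb{Z}$. Then for all $g,h \in G$, \[ \deg(g) + \deg(h) = \deg(g \vee h) + \deg(g \wedge h). \]
   Context: A right $\ell$-group is a group $G$ (identity $e$) with a right-invariant partial order under which $G$ is a lattice ($\wedge$, $\vee$). It is modular if the lattice is modular. It is noetherian if for each $g$ the set $\{h \geq g\}$ satisfies the descending chain condition and the set $\{h \leq g\}$ satisfies the ascending chain condition. Let $G^- = \{g \leq e\}$, and let $X(G^-)$ be the set of elements covered by $e$. In such a group every $g \in G^-$ is a product of elements of $X(G^-)$, and all such factorizations have the same length. The degree homomorphism $\deg : G \to \mathbb{Z}$ is the unique group homomorphism assigning to each $g \in G^-$ this length. *)

Set Implicit Arguments.
From Stdlib Require Import ZArith List.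
Import ListNotations.

Section RightLGroup.
Variables (T : Type) (mul : T -> T -> T) (inv : T -> T) (e : T)
          (le : T -> T -> Prop) (meet join : T -> T -> T).

Definition lt (x y : T) : Prop := le x y /\ x <> y.

Definition is_group : Prop :=
  (forall x y z, mul x (mul y z) = mul (mul x y) z) /\
  (forall x, mul e x = x /\ mul x e = x) /\
  (forall x, mul (inv x) x = e /\ mul x (inv x) = e).

Definition is_partial_order : Prop :=
  (forall x, le x x) /\
  (forall x y, le x y -> le y x -> x = y) /\
  (forall x y z, le x y -> le y z -> le x z).

Definition is_lattice_ops : Prop :=
  (forall x y, le (meet x y) x /\ le (meet x y) y /\
               forall z, le z x -> le z y -> le z (meet x y)) /\
  (forall x y, le x (join x y) /\ le y (join x y) /\
               forall z, le x z -> le y z -> le (join x y) z).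

Definition right_invariant : Prop :=
  forall x y z, le x y -> le (mul x z) (mul y z).

Definition right_lgroup : Prop :=
  is_group /\ is_partial_order /\ is_lattice_ops /\ right_invariant.

Definition modular : Prop :=
  forall x y z, le x z -> join x (meet y z) = meet (join x y) z.

Definition DCC (P : T -> Prop) : Prop :=
  ~ exists f : nat -> T, (forall n, P (f n)) /\ (forall n, lt (f (Datatypes.S n)) (f n)).
Definition ACC (P : T -> Prop) : Prop :=
  ~ exists f : nat -> T, (forall n, P (f n)) /\ (forall n, lt (f n) (f (Datatypes.S n))).

Definition noetherian : Prop :=
  forall g, DCC (fun h => le g h) /\ ACC (fun h => le h g).

Definition negcone (g : T) : Prop := le g e.
Definition covered_by_e (x : T) : Prop :=
  lt x e /\ ~ exists y, lt x y /\ lt y e.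

Definition prod_list (xs : list T) : T := fold_right mul e xs.

Definition is_degree_hom (deg : T -> Z) : Prop :=
  (forall x y, deg (mul x y) = (deg x + deg y)%Z) /\
  (forall g xs, negcone g -> Forall covered_by_e xs -> prod_list xs = g ->
     deg g = Z.of_nat (length xs)).

End RightLGroup.

(* For m = g ∧ h, modularity makes a ↦ a ∨ h an isomorphism of the interval
   [m, g] onto [h, g ∨ h], so it maps covers to covers.  A cover x ⋖ y means
   that x y⁻¹ is covered by e, hence deg x = deg y + 1.  The chain conditions
   allow an induction along covers from m up to g, which shows that
   deg b - deg (b ∨ h) is constant on [m, g]; comparing b = m with b = g gives
   the identity. *)
From Stdlib Require Import ZArith List Lia Classical ClassicalEpsilon ChoiceFacts.

Lemma exists_maximal (T : Type) (P Q : T -> Prop) (R : T -> T -> Prop) :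
  ~ (exists f : nat -> T, (forall n, P (f n)) /\ forall n, R (f n) (f (S n))) ->
  (forall x, Q x -> P x) ->
  forall x0, Q x0 -> exists y, Q y /\ ~ exists z, Q z /\ R y z.
Proof.
  intros no_chain QP x0 Qx0. apply NNPP. intro no_max.
  assert (step : forall p : {x | Q x}, exists q : {x | Q x}, R (proj1_sig p) (proj1_sig q)).
  { intros [x Qx]. apply NNPP. intro no_succ. apply no_max. exists x. split; [exact Qx|].
    intros [z [Qz Rxz]]. apply no_succ. exists (exist _ z Qz). exact Rxz. }
  destruct (functional_choice_imp_functional_dependent_choice choice _ step (exist _ x0 Qx0))
    as [f [_ Rf]].
  apply no_chain. exists (fun n => proj1_sig (f n)). split; [|exact Rf].
  intro n. apply QP, proj2_sig.
Qed.

Lemma DCC_ind (T : Type) (le : T -> T -> Prop) (P Q : T -> Prop) :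
  DCC le P ->
  (forall x, P x -> (forall y, P y -> lt le y x -> Q y) -> Q x) ->
  forall x, P x -> Q x.
Proof.
  intros dcc IH x Px. apply NNPP. intro notQx.
  destruct (@exists_maximal T P (fun y => P y /\ ~ Q y) (fun x y => lt le y x) dcc
              (fun y H => proj1 H) x (conj Px notQx)) as [y [[Py notQy] minimal]].
  apply notQy, IH; [exact Py|]. intros z Pz zy. apply NNPP. intro notQz.
  apply minimal. exists z. auto.
Qed.

Section RightLGroup.
Variables (T : Type) (le : T -> T -> Prop).

Definition covers (x y : T) : Prop :=
  lt le x y /\ ~ exists z, lt le x z /\ lt le z y.

Section Order.
Hypothesis order : is_partial_order le.
Let le_refl : forall x, le x x := proj1 order.
Let le_anti : forall x y, le x y -> le y x -> x = y := proj1 (proj2 order).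
Let le_trans : forall x y z, le x y -> le y z -> le x z := proj2 (proj2 order).

Lemma exists_covers_above {a b} :
  ACC le (fun x => le x b) -> le a b -> a <> b -> exists c, le a c /\ covers c b.
Proof.
  intros acc ab a_neq_b.
  destruct (@exists_maximal T _ (fun c => le a c /\ lt le c b) (lt le) acc
              (fun c H => proj1 (proj2 H)) a (conj (le_refl a) (conj ab a_neq_b)))
    as [c [[ac cb] maximal]].
  exists c. split; [exact ac|]. split; [exact cb|].
  intros [z [cz zb]]. apply maximal. exists z.
  split; [split; [exact (le_trans _ _ _ ac (proj1 cz)) | exact zb] | exact cz].
Qed.

Section Lattice.
Variables meet join : T -> T -> T.
Hypothesis lattice : is_lattice_ops le meet join.
Let meet_le_l x y : le (meet x y) x := proj1 (proj1 lattice x y).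
Let meet_le_r x y : le (meet x y) y := proj1 (proj2 (proj1 lattice x y)).
Let meet_glb x y z : le z x -> le z y -> le z (meet x y) := proj2 (proj2 (proj1 lattice x y)) z.
Let join_ge_l x y : le x (join x y) := proj1 (proj2 lattice x y).
Let join_ge_r x y : le y (join x y) := proj1 (proj2 (proj2 lattice x y)).
Let join_lub x y z : le x z -> le y z -> le (join x y) z := proj2 (proj2 (proj2 lattice x y)) z.

Lemma meet_comm x y : meet x y = meet y x.
Proof. apply le_anti; apply meet_glb; auto. Qed.

Lemma join_comm x y : join x y = join y x.
Proof. apply le_anti; apply join_lub; auto. Qed.

Lemma meet_r x y : le y x -> meet x y = y.
Proof. intro yx. apply le_anti; auto. Qed.

Lemma join_l x y : le y x -> join x y = x.
Proof. intro yx. apply le_anti; auto. Qed.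

Lemma join_r x y : le x y -> join x y = y.
Proof. intro xy. rewrite join_comm. now apply join_l. Qed.

Lemma join_mono_l {x y} z : le x y -> le (join x z) (join y z).
Proof. intro xy. apply join_lub; eauto. Qed.

Section Modular.
Hypothesis modularity : modular le meet join.

Lemma meet_join_transport {g h a} : le (meet g h) a -> le a g -> meet (join a h) g = a.
Proof.
  intros ma ag. rewrite <- (modularity a h g ag). apply join_l. now rewrite meet_comm.
Qed.

Lemma join_meet_transport {g h c} : le h c -> le c (join h g) -> join h (meet g c) = c.
Proof. intros hc c_le. rewrite (modularity h g c hc). now apply meet_r. Qed.

Lemma covers_join_transport {g h a b} :
  le (meet g h) a -> le b g -> covers a b -> covers (join a h) (join b h).
Proof.
  intros ma bg [[ab a_neq_b] no_between].
  assert (ag : le a g) by eauto.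
  assert (mb : le (meet g h) b) by eauto.
  split; [split|].
  - now apply join_mono_l.
  - intro E. apply a_neq_b.
    now rewrite <- (meet_join_transport ma ag), <- (meet_join_transport mb bg), E.
  - intros [c [[ac ac_neq] [cb cb_neq]]].
    set (d := meet g c).
    assert (c_eq : join h d = c).
    { apply join_meet_transport; [eauto|].
      rewrite join_comm. eapply le_trans; [exact cb|]. now apply join_mono_l. }
    apply no_between. exists d. split; split.
    + apply meet_glb; eauto.
    + intro ad. apply ac_neq. rewrite <- c_eq, <- ad. apply join_comm.
    + rewrite <- (meet_join_transport mb bg). apply meet_glb; eauto.
    + intro db. apply cb_neq. rewrite <- c_eq, db. apply join_comm.
Qed.

Section Group.
Variables (mul : T -> T -> T) (inv : T -> T) (e : T).
Hypothesis group : is_group mul inv e.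
Hypothesis right_inv : right_invariant mul le.
Let mulA : forall x y z, mul x (mul y z) = mul (mul x y) z := proj1 group.
Let mulg1 x : mul x e = x := proj2 (proj1 (proj2 group) x).
Let mulgV x : mul x (inv x) = e := proj2 (proj2 (proj2 group) x).

Lemma mulgK x y : mul (mul x y) (inv y) = x.
Proof. now rewrite <- mulA, mulgV, mulg1. Qed.

Lemma lt_mulr {x y} z : lt le x y -> lt le (mul x z) (mul y z).
Proof.
  intros [xy x_neq_y]. split; [now apply right_inv|].
  intro E. apply x_neq_y. now rewrite <- (mulgK x z), E, mulgK.
Qed.

Lemma covers_mulr {x y} z : covers x y -> covers (mul x z) (mul y z).
Proof.
  intros [xy no_between]. split; [now apply lt_mulr|].
  intros [w [xw wy]]. apply no_between. exists (mul w (inv z)).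
  pose proof (lt_mulr (inv z) xw) as xw'. pose proof (lt_mulr (inv z) wy) as wy'.
  rewrite mulgK in xw', wy'. now split.
Qed.

Section Degree.
Variable deg : T -> Z.
Hypothesis degree : is_degree_hom mul e le deg.
Let deg_mul x y : deg (mul x y) = (deg x + deg y)%Z := proj1 degree x y.

Lemma deg_e : deg e = 0%Z.
Proof. pose proof (deg_mul e e) as H. rewrite mulg1 in H. lia. Qed.

Lemma deg_inv x : deg (inv x) = (- deg x)%Z.
Proof. pose proof (deg_mul x (inv x)) as H. rewrite mulgV, deg_e in H. lia. Qed.

Lemma deg_covered_by_e u : covered_by_e e le u -> deg u = 1%Z.
Proof.
  intro u_cov. apply (proj2 degree u (u :: nil)).
  - exact (proj1 (proj1 u_cov)).
  - now constructor.
  - apply mulg1.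
Qed.

Lemma covers_deg {x y} : covers x y -> deg x = (deg y + 1)%Z.
Proof.
  intro xy. pose proof (covers_mulr (inv y) xy) as u_cov. rewrite mulgV in u_cov.
  apply deg_covered_by_e in u_cov. rewrite deg_mul, deg_inv in u_cov. lia.
Qed.

Hypothesis noeth : noetherian le.

Lemma deg_join_transport {g} h {b} :
  le (meet g h) b -> le b g -> (deg b - deg (join b h) = deg (meet g h) - deg h)%Z.
Proof.
  revert b. apply (@DCC_ind T le _ (fun b => le b g -> _) (proj1 (noeth (meet g h)))).
  intros b mb IH bg.
  destruct (classic (meet g h = b)) as [<- | m_neq_b].
  - rewrite join_r by apply meet_le_r. lia.
  - destruct (exists_covers_above (proj2 (noeth b)) mb m_neq_b) as [a [ma ab]].
    assert (ag : le a g) by exact (le_trans _ _ _ (proj1 (proj1 ab)) bg).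
    specialize (IH a ma (proj1 ab) ag).
    pose proof (covers_deg ab). pose proof (covers_deg (covers_join_transport ma bg ab)).
    lia.
Qed.

Lemma deg_join_meet g h : (deg g + deg h = deg (join g h) + deg (meet g h))%Z.
Proof.
  pose proof (deg_join_transport h (meet_le_l g h) (le_refl g)). lia.
Qed.

End Degree.
End Group.
End Modular.
End Lattice.
End Order.
End RightLGroup.

Theorem mainTheorem4 (T : Type) (mul : T -> T -> T) (inv : T -> T) (e : T)
  (le : T -> T -> Prop) (meet join : T -> T -> T) (deg : T -> Z) :
  right_lgroup mul inv e le meet join ->
  modular le meet join ->
  noetherian le ->
  is_degree_hom mul e le deg ->
  forall g h : T, (deg g + deg h = deg (join g h) + deg (meet g h))%Z.
Proof.
  intros [group [order [lattice right_inv]]] modularity noeth degree.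
  eapply deg_join_meet; eassumption.
Qed.
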